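(* Let $p$ be a positive integer, $L,E,\sigma>0$ with $L,E\in 2^{-p}\mathbb{Z}$, and $x\in\mathcal{A}_{p,E}$. If $y$ is drawn with probability mass function $f^{(\mathtt{CLap})}_{x,\sigma}$ on $\mathcal{B}_{p,L+E}$, then \[ \mathbb{E}(y)=x\cdot\frac{\sigma(1-e^{-L/\sigma})-e^{-L/\sigma}L}{\sigma(1-e^{-L/\sigma})+e^{-L/\sigma}E}-\frac{2^{-p}}{2}. \]
   Context: For $p\in\mathbb{Z}_{>0}$ and $B>0$, $2^{-p}\mathbb{Z}=\{a/2^p: a\in\mathbb{Z}\}$, $\mathcal{A}_{p,B}:=[-B,B]\cap 2^{-p}\mathbb{Z}$ and $\mathcal{B}_{p,B}:=\mathcal{A}_{p,B}\setminus\{B\}$. The truncated cumulative Laplace mechanism with parameters $L,E,\sigma>0$ maps $x\in\mathcal{A}_{p,E}$ to $y\in\mathcal{B}_{p,L+E}$ with probability $f^{(\mathtt{CLap})}_{x,\sigma}(y)=\frac{1}{\lambda^{(\mathtt{CLap})}_{L,E,\sigma}}\int_y^{y+2^{-p}}e^{-\min(|r-x|,L)/\sigma}dr$, where $\lambda^{(\mathtt{CLap})}_{L,E,\sigma}=\sum_{y\in\mathcal{B}_{p,L+E}}\int_y^{y+2^{-p}}e^{-\min(|r-x|,L)/\sigma}dr$ is the normalizing constant. *)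

From Stdlib Require Import Reals ZArith List.
From Coquelicot Require Import Coquelicot.
Open Scope R_scope.

Definition Zrange (M : Z) : list Z :=
  map (fun k => (- M + Z.of_nat k)%Z) (seq 0 (Z.to_nat (2 * M + 1))).

(* A_{p,B} = [-B,B] ∩ 2^{-p} Z, enumerated (without repetition) as a list.
   Every a with |a/2^p| <= B satisfies |a| <= |up (B*2^p)|. *)
Definition gridA (p : nat) (B : R) : list R :=
  filter (fun y => if Rle_dec (- B) y then (if Rle_dec y B then true else false) else false)
    (map (fun a => IZR a / 2 ^ p) (Zrange (Z.abs (up (B * 2 ^ p))))).

Definition gridB (p : nat) (B : R) : list R :=
  filter (fun y => if Req_EM_T y B then false else true) (gridA p B).

Definition sumR (l : list R) : R := fold_right Rplus 0 l.

Definition clap_kernel (L sigma x r : R) : R :=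
  exp (- Rmin (Rabs (r - x)) L / sigma).

Definition clap_cell (p : nat) (L sigma x y : R) : R :=
  RInt (clap_kernel L sigma x) y (y + / 2 ^ p).

Definition clap_lambda (p : nat) (L E sigma x : R) : R :=
  sumR (map (clap_cell p L sigma x) (gridB p (L + E))).

Definition clap_pmf (p : nat) (L E sigma x y : R) : R :=
  clap_cell p L sigma x y / clap_lambda p L E sigma x.

Definition clap_mean (p : nat) (L E sigma x : R) : R :=
  sumR (map (fun y => y * clap_pmf p L E sigma x y) (gridB p (L + E))).

(* Write h = 2^-p.  Since x, L and E are multiples of h, the grid B_{p,L+E}, an arithmetic
   progression of step h, splits at x - L, x and x + L into four blocks.  On the outer blocks
   the kernel is the constant e^{-L/sigma}, so each cell has mass e^{-L/sigma} h and these
   blocks contribute arithmetic series.  On the inner blocks the cells starting at x - (k+1)h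
   and x + kh both have mass sigma (e^{-kh/sigma} - e^{-(k+1)h/sigma}): their masses telescope
   to 2 sigma (1 - e^{-L/sigma}), and since their positions add up to 2x - h, their first
   moment is (2x - h) sigma (1 - e^{-L/sigma}).  Dividing the first moment by the total mass,
   with block lengths (x + E)/h and (E - x)/h, gives the formula. *)

From Stdlib Require Import Reals ZArith List Lra Lia.
From Coquelicot Require Import Coquelicot.
Open Scope R_scope.

Lemma sumR_app (l1 l2 : list R) : sumR (l1 ++ l2) = sumR l1 + sumR l2.
Proof. induction l1 as [|a l1 IH]; simpl; [ring | rewrite IH; ring]. Qed.

Lemma sumR_map_mult_r (f : R -> R) (c : R) (l : list R) :
  sumR (map (fun y => f y * c) l) = sumR (map f l) * c.
Proof. induction l as [|a l IH]; simpl; [ring | rewrite IH; ring]. Qed.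

Lemma sumR_const (c : R) (l : list R) :
  sumR (map (fun _ => c) l) = c * INR (length l).
Proof.
  induction l as [|a l IH]; cbn [map sumR fold_right length]; [simpl; ring|].
  fold (sumR (map (fun _ => c) l)). rewrite IH, S_INR. ring.
Qed.

Section Progression.

Variable h : R.

Fixpoint progression (s : R) (n : nat) : list R :=
  match n with O => nil | S n => s :: progression (s + h) n end.

Lemma length_progression s n : length (progression s n) = n.
Proof. revert s; induction n; intros s; simpl; auto. Qed.

Lemma progression_add m : forall s n,
  progression s (m + n) = progression s m ++ progression (s + INR m * h) n.
Proof.
  induction m as [|m IH]; intros s n; [simpl | rewrite Nat.add_succ_l; cbn [progression app]].
  - now rewrite Rmult_0_l, Rplus_0_r.
  - rewrite IH, S_INR. do 3 f_equal. ring.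
Qed.

Lemma progression_S_r s n : progression s (S n) = progression s n ++ (s + INR n * h) :: nil.
Proof. now rewrite <- Nat.add_1_r, progression_add. Qed.

Lemma In_progression y s n :
  In y (progression s n) -> exists k, (k < n)%nat /\ y = s + INR k * h.
Proof.
  revert s; induction n as [|n IH]; intros s Hy; [contradiction|].
  destruct Hy as [<- | Hy].
  - exists 0%nat. split; [lia | simpl; ring].
  - destruct (IH _ Hy) as [k [Hk ->]]. exists (S k). split; [lia | rewrite S_INR; ring].
Qed.

Lemma In_progression_bounds y s n : 0 <= h ->
  In y (progression s n) -> s <= y /\ y + h <= s + INR n * h.
Proof.
  intros Hh Hy. destruct (In_progression _ _ _ Hy) as [k [Hk ->]].
  assert (0 <= INR k) by apply pos_INR.
  assert (INR k + 1 <= INR n) by (rewrite <- S_INR; apply le_INR; lia).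
  nra.
Qed.

Lemma map_seq_progression (f : nat -> R) n : forall a,
  (forall k, f (S k) = f k + h) -> map f (seq a n) = progression (f a) n.
Proof.
  induction n as [|n IH]; intros a Hf; simpl; auto.
  rewrite IH, Hf; auto.
Qed.

Lemma sumR_progression s n :
  sumR (progression s n) = INR n * s + h * INR n * (INR n - 1) / 2.
Proof.
  revert s; induction n as [|n IH]; intros s; simpl progression; [simpl; field|].
  cbn [sumR fold_right]. fold (sumR (progression (s + h) n)).
  rewrite IH, S_INR. field.
Qed.

End Progression.

Lemma RInt_exp_affine (s x a b : R) : s <> 0 ->
  RInt (fun r => exp ((r - x) / s)) a b = s * (exp ((b - x) / s) - exp ((a - x) / s)).
Proof.
  intros Hs. apply is_RInt_unique.
  replace (s * (exp ((b - x) / s) - exp ((a - x) / s)))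
    with (minus ((fun r => s * exp ((r - x) / s)) b) ((fun r => s * exp ((r - x) / s)) a))
    by (unfold minus, plus, opp; simpl; ring).
  apply (is_RInt_derive (fun r => s * exp ((r - x) / s))).
  - intros r _. auto_derive; auto. unfold Rminus, Rdiv. field. auto.
  - intros r _. apply (ex_derive_continuous (fun r => exp ((r - x) / s))). auto_derive. auto.
Qed.

Section KernelIntegrals.

Variables (L sigma x : R).
Hypothesis sigma_gt0 : 0 < sigma.

Lemma RInt_clap_kernel_outer a b : 0 <= L -> a <= b -> b <= x - L \/ x + L <= a ->
  RInt (clap_kernel L sigma x) a b = exp (- L / sigma) * (b - a).
Proof.
  intros HL Hab Hout. rewrite (RInt_ext _ (fun _ => exp (- L / sigma))).
  - rewrite RInt_const. unfold scal; simpl; unfold mult; simpl. ring.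
  - intros r Hr. rewrite Rmin_left, Rmax_right in Hr by lra.
    unfold clap_kernel. rewrite Rmin_right; auto.
    destruct Hout; [rewrite Rabs_left1 | rewrite Rabs_right]; lra.
Qed.

Lemma RInt_clap_kernel_left a b : x - L <= a -> a <= b -> b <= x ->
  RInt (clap_kernel L sigma x) a b = sigma * (exp ((b - x) / sigma) - exp ((a - x) / sigma)).
Proof.
  intros Ha Hab Hb. rewrite <- RInt_exp_affine by lra. apply RInt_ext.
  intros r Hr. rewrite Rmin_left, Rmax_right in Hr by lra.
  unfold clap_kernel. rewrite Rabs_left1, Rmin_left by lra. f_equal. field. lra.
Qed.

Lemma RInt_clap_kernel_right a b : x <= a -> a <= b -> b <= x + L ->
  RInt (clap_kernel L sigma x) a b = sigma * (exp (- (a - x) / sigma) - exp (- (b - x) / sigma)).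
Proof.
  intros Ha Hab Hb.
  replace (sigma * _) with (- sigma * (exp ((b - x) / - sigma) - exp ((a - x) / - sigma))).
  - rewrite <- RInt_exp_affine by lra. apply RInt_ext.
    intros r Hr. rewrite Rmin_left, Rmax_right in Hr by lra.
    unfold clap_kernel. rewrite Rabs_right, Rmin_left by lra. f_equal. field. lra.
  - replace ((a - x) / - sigma) with (- (a - x) / sigma) by (field; lra).
    replace ((b - x) / - sigma) with (- (b - x) / sigma) by (field; lra).
    ring.
Qed.

End KernelIntegrals.

Lemma inv_pow2_gt0 p : 0 < / 2 ^ p.
Proof. apply Rinv_0_lt_compat, pow_lt; lra. Qed.

Section Window.

Variables (p : nat) (L sigma x : R).
Hypothesis sigma_gt0 : 0 < sigma.

Local Notation h := (/ 2 ^ p).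
Local Notation cell := (clap_cell p L sigma x).

Lemma clap_cell_outer y : 0 <= L -> y + h <= x - L \/ x + L <= y ->
  cell y = exp (- L / sigma) * h.
Proof.
  intros HL Hy. pose proof (inv_pow2_gt0 p). unfold clap_cell.
  rewrite RInt_clap_kernel_outer; [ring | lra | lra | destruct Hy; [left | right]; lra].
Qed.

Lemma clap_cells_window_step l : INR (S l) * h <= L ->
  cell (x - INR (S l) * h) = sigma * (exp (- (INR l * h) / sigma) - exp (- (INR (S l) * h) / sigma))
  /\ cell (x + INR l * h) = sigma * (exp (- (INR l * h) / sigma) - exp (- (INR (S l) * h) / sigma)).
Proof.
  pose proof (inv_pow2_gt0 p). rewrite S_INR. intros Hl.
  assert (0 <= INR l * h) by (apply Rmult_le_pos; [apply pos_INR | lra]).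
  unfold clap_cell. split.
  - rewrite RInt_clap_kernel_left by lra.
    replace (x - (INR l + 1) * h + h - x) with (- (INR l * h)) by ring.
    replace (x - (INR l + 1) * h - x) with (- ((INR l + 1) * h)) by ring.
    reflexivity.
  - rewrite RInt_clap_kernel_right by lra.
    replace (x + INR l * h - x) with (INR l * h) by ring.
    replace (x + INR l * h + h - x) with ((INR l + 1) * h) by ring.
    reflexivity.
Qed.

Lemma sumR_window_step (f : R -> R) l :
  sumR (map f (progression h (x - INR (S l) * h) (S l))) + sumR (map f (progression h x (S l)))
  = sumR (map f (progression h (x - INR l * h) l)) + sumR (map f (progression h x l))
    + (f (x - INR (S l) * h) + f (x + INR l * h)).
Proof.
  rewrite (progression_S_r h x l).
  change (progression h (x - INR (S l) * h) (S l))
    with (x - INR (S l) * h :: progression h (x - INR (S l) * h + h) l).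
  replace (x - INR (S l) * h + h) with (x - INR l * h) by (rewrite S_INR; ring).
  rewrite map_app, sumR_app. unfold sumR; cbn [map fold_right]. ring.
Qed.

Lemma clap_window_mass l : INR l * h <= L ->
  sumR (map cell (progression h (x - INR l * h) l)) + sumR (map cell (progression h x l))
  = 2 * sigma * (1 - exp (- (INR l * h) / sigma)).
Proof.
  induction l as [|l IH]; intros Hl.
  - simpl. replace (- (0 * h) / sigma) with 0 by (unfold Rdiv; ring). rewrite exp_0. ring.
  - pose proof (inv_pow2_gt0 p).
    rewrite sumR_window_step, IH by (rewrite S_INR in Hl; lra).
    destruct (clap_cells_window_step l Hl) as [-> ->]. ring.
Qed.

Lemma clap_window_moment l : INR l * h <= L ->
  sumR (map (fun y => y * cell y) (progression h (x - INR l * h) l))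
  + sumR (map (fun y => y * cell y) (progression h x l))
  = (2 * x - h) * sigma * (1 - exp (- (INR l * h) / sigma)).
Proof.
  induction l as [|l IH]; intros Hl.
  - simpl. replace (- (0 * h) / sigma) with 0 by (unfold Rdiv; ring). rewrite exp_0. ring.
  - pose proof (inv_pow2_gt0 p).
    rewrite sumR_window_step, IH by (rewrite S_INR in Hl; lra).
    destruct (clap_cells_window_step l Hl) as [-> ->]. rewrite S_INR. ring.
Qed.

End Window.

Section Grid.

Variables (p K : nat).

Local Notation h := (/ 2 ^ p).
Local Notation B := (INR K * / 2 ^ p).

Lemma map_Zrange_dyadic N : (0 <= N)%Z ->
  map (fun a => IZR a / 2 ^ p) (Zrange N) = progression h (- IZR N * h) (Z.to_nat (2 * N + 1)).
Proof.
  intros HN. unfold Zrange. rewrite map_map, (map_seq_progression h).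
  - f_equal. rewrite Z.add_0_r, opp_IZR. unfold Rdiv. ring.
  - intros k. rewrite Nat2Z.inj_succ, Z.add_succ_r, succ_IZR. unfold Rdiv. ring.
Qed.

(* [Zrange] overshoots [-B, B] by exactly one grid point on each side; the filter
   removes those two points. *)
Lemma gridA_progression : gridA p B = progression h (- B) (2 * K + 1).
Proof.
  pose proof (inv_pow2_gt0 p) as Hh.
  assert (HB0 : 0 <= B) by (apply Rmult_le_pos; [apply pos_INR | lra]).
  assert (Hup : Z.abs (up (B * 2 ^ p)) = (Z.of_nat K + 1)%Z).
  { replace (B * 2 ^ p) with (IZR (Z.of_nat K))
      by (rewrite <- INR_IZR_INZ; field; apply pow_nonzero; lra).
    rewrite <- (up_tech _ (Z.of_nat K)) by (rewrite ?plus_IZR; lra). lia. }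
  unfold gridA. rewrite Hup, map_Zrange_dyadic by lia.
  replace (Z.to_nat (2 * (Z.of_nat K + 1) + 1)) with (S (S (2 * K + 1))) by lia.
  rewrite plus_IZR, <- INR_IZR_INZ.
  change (progression h (- (INR K + 1) * h) (S (S (2 * K + 1))))
    with (- (INR K + 1) * h :: progression h (- (INR K + 1) * h + h) (S (2 * K + 1))).
  replace (- (INR K + 1) * h + h) with (- B) by ring.
  rewrite progression_S_r, plus_INR, mult_INR.
  replace (INR 2) with 2 by (simpl; ring). change (INR 1) with 1.
  cbn [filter]. rewrite filter_app. cbn [filter].
  destruct (Rle_dec (- B) (- (INR K + 1) * h)); [nra|].
  destruct (Rle_dec (- B) (- B + (2 * INR K + 1) * h)); [|nra].
  destruct (Rle_dec (- B + (2 * INR K + 1) * h) B); [nra|].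
  rewrite app_nil_r. apply forallb_filter_id, forallb_forall.
  intros y Hy. apply (In_progression_bounds h) in Hy; [|lra].
  rewrite plus_INR, mult_INR in Hy. replace (INR 2) with 2 in Hy by (simpl; ring).
  change (INR 1) with 1 in Hy.
  destruct (Rle_dec (- B) y); [destruct (Rle_dec y B)|]; auto; nra.
Qed.

Lemma gridB_progression : gridB p B = progression h (- B) (2 * K).
Proof.
  pose proof (inv_pow2_gt0 p) as Hh.
  unfold gridB. rewrite gridA_progression, Nat.add_1_r, progression_S_r, filter_app.
  replace (- B + INR (2 * K) * h) with B by (rewrite mult_INR; simpl INR; ring).
  cbn [filter]. destruct (Req_EM_T B B) as [_|]; [|lra].
  rewrite app_nil_r. apply forallb_filter_id, forallb_forall.
  intros y Hy. apply (In_progression_bounds h) in Hy; [|lra].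
  rewrite mult_INR in Hy. replace (INR 2) with 2 in Hy by (simpl; ring).
  destruct (Req_EM_T y B); auto; lra.
Qed.

End Grid.

Definition grid_split (h x L : R) (nA l nD : nat) : list R :=
  progression h (x - L - INR nA * h) nA ++ progression h (x - L) l
  ++ progression h x l ++ progression h (x + L) nD.

Lemma gridB_split p L E x KL KE k :
  L = INR KL * / 2 ^ p -> E = INR KE * / 2 ^ p -> x = - E + INR k * / 2 ^ p -> (k <= 2 * KE)%nat ->
  gridB p (L + E) = grid_split (/ 2 ^ p) x L k KL (2 * KE - k).
Proof.
  intros HL HE Hx Hk.
  replace (L + E) with (INR (KL + KE) * / 2 ^ p) by (rewrite plus_INR; lra).
  rewrite gridB_progression.
  replace (2 * (KL + KE))%nat with (k + (KL + (KL + (2 * KE - k))))%nat by lia.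
  unfold grid_split. rewrite !progression_add, !plus_INR.
  f_equal; [f_equal; lra | f_equal; [f_equal; lra | f_equal; f_equal; lra]].
Qed.

Section Blocks.

Variables (p : nat) (L sigma x : R) (l nA nD : nat).
Hypothesis sigma_gt0 : 0 < sigma.
Hypothesis L_eq : L = INR l * / 2 ^ p.

Local Notation h := (/ 2 ^ p).
Local Notation cell := (clap_cell p L sigma x).

Let L_ge0 : 0 <= L.
Proof. rewrite L_eq. apply Rmult_le_pos; [apply pos_INR | pose proof (inv_pow2_gt0 p); lra]. Qed.

Let cells_left y : In y (progression h (x - L - INR nA * h) nA) -> cell y = exp (- L / sigma) * h.
Proof.
  intros Hy. apply (In_progression_bounds h) in Hy; [|pose proof (inv_pow2_gt0 p); lra].
  apply clap_cell_outer; auto. lra.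
Qed.

Let cells_right y : In y (progression h (x + L) nD) -> cell y = exp (- L / sigma) * h.
Proof.
  intros Hy. apply (In_progression_bounds h) in Hy; [|pose proof (inv_pow2_gt0 p); lra].
  apply clap_cell_outer; auto. lra.
Qed.

Lemma sumR_clap_cells_split :
  sumR (map cell (grid_split h x L nA l nD))
  = exp (- L / sigma) * h * (INR nA + INR nD) + 2 * sigma * (1 - exp (- L / sigma)).
Proof.
  unfold grid_split. rewrite !map_app, !sumR_app.
  rewrite (map_ext_in _ _ _ cells_left), (map_ext_in _ _ _ cells_right).
  rewrite !sumR_const, !length_progression.
  pose proof (clap_window_mass p L sigma x sigma_gt0 l) as Hmass.
  rewrite <- L_eq in Hmass. rewrite <- Hmass by lra. ring.
Qed.

Lemma sumR_clap_moments_split :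
  sumR (map (fun y => y * cell y) (grid_split h x L nA l nD))
  = exp (- L / sigma) * h * (sumR (progression h (x - L - INR nA * h) nA) + sumR (progression h (x + L) nD))
    + (2 * x - h) * sigma * (1 - exp (- L / sigma)).
Proof.
  unfold grid_split. rewrite !map_app, !sumR_app.
  rewrite (map_ext_in _ (fun y => y * (exp (- L / sigma) * h)) (progression h (x - L - _) nA))
    by (intros y Hy; rewrite cells_left; auto).
  rewrite (map_ext_in _ (fun y => y * (exp (- L / sigma) * h)) (progression h (x + L) nD))
    by (intros y Hy; rewrite cells_right; auto).
  rewrite !sumR_map_mult_r, !map_id.
  pose proof (clap_window_moment p L sigma x sigma_gt0 l) as Hmoment.
  rewrite <- L_eq in Hmoment. rewrite <- Hmoment by lra. ring.
Qed.

End Blocks.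

Lemma nonneg_dyadic_INR p B (a : Z) : 0 <= B -> B = IZR a / 2 ^ p -> exists K, B = INR K * / 2 ^ p.
Proof.
  intros HB ->. assert (Hp : 0 < 2 ^ p) by (apply pow_lt; lra).
  exists (Z.to_nat a). rewrite INR_IZR_INZ, Z2Nat.id; [reflexivity|].
  apply le_IZR. replace (IZR a) with (IZR a / 2 ^ p * 2 ^ p) by (field; lra). nra.
Qed.

Lemma clap_mean_ratio p L E sigma x :
  clap_mean p L E sigma x
  = sumR (map (fun y => y * clap_cell p L sigma x y) (gridB p (L + E))) / clap_lambda p L E sigma x.
Proof.
  unfold clap_mean, clap_pmf, Rdiv. rewrite <- sumR_map_mult_r.
  f_equal. apply map_ext. intros y. ring.
Qed.

Theorem mainTheorem11 (p : nat) (L E sigma x : R) :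
  (0 < p)%nat -> 0 < L -> 0 < E -> 0 < sigma ->
  (exists a : Z, L = IZR a / 2 ^ p) ->
  (exists a : Z, E = IZR a / 2 ^ p) ->
  In x (gridA p E) ->
  clap_mean p L E sigma x =
    x * ((sigma * (1 - exp (- L / sigma)) - exp (- L / sigma) * L)
         / (sigma * (1 - exp (- L / sigma)) + exp (- L / sigma) * E))
    - / 2 ^ p / 2.
Proof.
  intros _ HL HE Hs [aL HaL] [aE HaE] Hx.
  destruct (nonneg_dyadic_INR p L aL) as [KL HKL]; [lra | auto |].
  destruct (nonneg_dyadic_INR p E aE) as [KE HKE]; [lra | auto |].
  rewrite HKE, gridA_progression, <- HKE in Hx.
  destruct (In_progression _ _ _ _ Hx) as [k [Hk Hxk]].
  rewrite clap_mean_ratio. unfold clap_lambda.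
  rewrite (gridB_split p L E x KL KE k) by (auto; lia).
  rewrite (sumR_clap_cells_split p L sigma x KL), (sumR_clap_moments_split p L sigma x KL),
    !sumR_progression by auto.
  assert (Hp : 0 < 2 ^ p) by (apply pow_lt; lra).
  assert (Hleft : INR k = (x + E) * 2 ^ p) by (rewrite Hxk; field; lra).
  assert (Hright : INR (2 * KE - k) = (E - x) * 2 ^ p).
  { rewrite minus_INR, mult_INR, Hleft, HKE by lia. simpl INR. field. lra. }
  assert (Hc0 : 0 < exp (- L / sigma)) by apply exp_pos.
  assert (Hc1 : exp (- L / sigma) < 1).
  { rewrite <- exp_0. apply exp_increasing.
    assert (0 < L / sigma) by (apply Rdiv_lt_0_compat; lra). unfold Rdiv in *. lra. }
  assert (Hden : 0 < sigma * (1 - exp (- L / sigma)) + exp (- L / sigma) * E) by nra.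
  rewrite Hleft, Hright. field. split; [lra | split; [lra | nra]].
Qed.
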